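(* Let $J_{\mathrm{dual}}$, $H$, $W$ be as in the context. Assume that the set $\Gamma_+^*$ of minimizers of $J_{\mathrm{dual}}$ is nonempty, and let $\lambda^*\in\Gamma_+^*$. Let $\{\lambda^k\}$ be generated by the BSUM iteration described in the context, from a starting point $\lambda^0$ with $J_{\mathrm{dual}}(\lambda^0)<\infty$. Define $\mathcal F=\{\lambda:J_{\mathrm{dual}}(\lambda)\le J_{\mathrm{dual}}(\lambda^0)\}$ and $\mathcal R=\sup_{\lambda\in\mathcal F,\ \lambda'\in\Gamma_+^*}\|\lambda-\lambda'\|$, and assume $\mathcal R<\infty$. Let $\sigma=1/(9\|H\|\mathcal R^2)$ and $c=\max\{4\sigma-2,\ J_{\mathrm{dual}}(\lambda^0)-J_{\mathrm{dual}}(\lambda^* ),\ 2\}$. Then $J_{\mathrm{dual}}(\lambda^k)-J_{\mathrm{dual}}(\lambda^* )\le \frac{c}{\sigma}\cdot\frac1k$ for all $k\ge1$.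
   Context: $\Gamma_+^k=\{\mathrm{vec}(X):X\in\mathbb{R}^{k\times k}\text{ symmetric positive semidefinite}\}\subset\mathbb{R}^{k^2}$. $I_C$ denotes the indicator function of $C$, and $\Pi_C$ denotes Euclidean projection onto $C$. $\lambda=(\lambda_{\hat Q},\lambda_{\hat P},\lambda_{\hat R})\in\mathbb{R}^{n^2}\times\mathbb{R}^{n^2}\times\mathbb{R}^{m^2}$. $H$ is symmetric positive semidefinite, partitioned conformally into blocks $H_{ij}$ with $i,j\in\{Q,P,R\}$ and $H_{ji}=H_{ij}^\top$. (In the paper $H=U(\Omega^\top\Omega)^\dagger U^\top$.) $W=[0_{1\times n^2},\mathrm{vec}(\epsilon I_n)^\top,\mathrm{vec}(\epsilon I_m)^\top]^\top$ with $\epsilon>0$. The objective is $J_{\mathrm{dual}}(\lambda)=\tfrac14\lambda^\top H\lambda+\lambda^\top W+I_{\Gamma_+^n}(\lambda_{\hat Q})+I_{\Gamma_+^n}(\lambda_{\hat P})+I_{\Gamma_+^m}(\lambda_{\hat R})$. $\|H\|$ is the spectral norm. BSUM iteration: let $\alpha=\lambda_{\max}(H_{QQ})$, $\beta=\lambda_{\max}(H_{PP})$, $\gamma=\lambda_{\max}(H_{RR})$, all assumed positive. The blocks are updated cyclically. Each block is updated by minimizing $J_{\mathrm{dual}}$ in that block, with the other blocks fixed at their most recent values, plus the proximal term $\tfrac12\|\lambda_i-\lambda_i^k\|^2_{S_i}$, where $S_{\hat Q}=\alpha I-\tfrac12H_{QQ}$, $S_{\hat P}=\beta I-\tfrac12H_{PP}$,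 $S_{\hat R}=\gamma I-\tfrac12H_{RR}$. Explicitly: - $\lambda_{\hat Q}^{k+1}=\Pi_{\Gamma_+^n}\big(\lambda_{\hat Q}^k-\tfrac1{2\alpha}(H_{QQ}\lambda_{\hat Q}^k+H_{QP}\lambda_{\hat P}^k+H_{QR}\lambda_{\hat R}^k)\big)$; - $\lambda_{\hat P}^{k+1}=\Pi_{\Gamma_+^n}\big(\lambda_{\hat P}^k-\tfrac1{2\beta}(H_{PQ}\lambda_{\hat Q}^{k+1}+H_{PP}\lambda_{\hat P}^k+H_{PR}\lambda_{\hat R}^k)-\tfrac1\beta\mathrm{vec}(\epsilon I_n)\big)$; - $\lambda_{\hat R}^{k+1}=\Pi_{\Gamma_+^m}\big(\lambda_{\hat R}^k-\tfrac1{2\gamma}(H_{RQ}\lambda_{\hat Q}^{k+1}+H_{RP}\lambda_{\hat P}^{k+1}+H_{RR}\lambda_{\hat R}^k)-\tfrac1\gamma\mathrm{vec}(\epsilon I_m)\big)$. *)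

From HB Require Import structures.
From mathcomp Require Import all_boot all_order all_algebra.
From mathcomp Require Import boolp classical_sets reals constructive_ereal.
Set Implicit Arguments. Unset Strict Implicit. Unset Printing Implicit Defensive.
Import Order.TTheory GRing.Theory Num.Theory.
Local Open Scope ring_scope.

Section Defs.
Variable R : realType.

Definition enorm (p : nat) (v : 'cV[R]_p) : R := Num.sqrt (\sum_i v i 0 ^+ 2).

Definition lambda_max (p : nat) (A : 'M[R]_p) : R :=
  sup [set ((x^T *m A *m x) 0 0) | x in [set x : 'cV[R]_p | enorm x = 1]]%classic.

Definition spec_norm (p q : nat) (A : 'M[R]_(p, q)) : R :=
  sup [set enorm (A *m x) | x in [set x : 'cV[R]_q | enorm x <= 1]]%classic.

Definition is_psd (p : nat) (A : 'M[R]_p) : Prop :=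
  A^T = A /\ forall u : 'cV[R]_p, 0 <= (u^T *m A *m u) 0 0.

Definition Gamma_plus (k : nat) : set 'cV[R]_(k * k) :=
  [set v | exists X : 'M[R]_k, is_psd X /\ v = (mxvec X)^T]%classic.

Definition is_proj (p : nat) (C : set 'cV[R]_p) (x y : 'cV[R]_p) : Prop :=
  C y /\ forall z, C z -> enorm (x - y) <= enorm (x - z).

Definition indic (T : Type) (C : set T) (x : T) : \bar R :=
  if pselect (C x) then 0%E else +oo%E.

Definition dimN (n m : nat) := ((n * n + n * n) + m * m)%N.

Definition blkQ n m (l : 'cV[R]_(dimN n m)) : 'cV[R]_(n * n) := usubmx (usubmx l).
Definition blkP n m (l : 'cV[R]_(dimN n m)) : 'cV[R]_(n * n) := dsubmx (usubmx l).
Definition blkR n m (l : 'cV[R]_(dimN n m)) : 'cV[R]_(m * m) := dsubmx l.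

Definition HQQ n m (H : 'M[R]_(dimN n m)) := ulsubmx (ulsubmx H).
Definition HQP n m (H : 'M[R]_(dimN n m)) := ursubmx (ulsubmx H).
Definition HQR n m (H : 'M[R]_(dimN n m)) := usubmx (ursubmx H).
Definition HPQ n m (H : 'M[R]_(dimN n m)) := dlsubmx (ulsubmx H).
Definition HPP n m (H : 'M[R]_(dimN n m)) := drsubmx (ulsubmx H).
Definition HPR n m (H : 'M[R]_(dimN n m)) := dsubmx (ursubmx H).
Definition HRQ n m (H : 'M[R]_(dimN n m)) := lsubmx (dlsubmx H).
Definition HRP n m (H : 'M[R]_(dimN n m)) := rsubmx (dlsubmx H).
Definition HRR n m (H : 'M[R]_(dimN n m)) := drsubmx H.

Definition Wvec n m (eps : R) : 'cV[R]_(dimN n m) :=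
  col_mx (col_mx 0 (mxvec (eps%:M : 'M[R]_n))^T) (mxvec (eps%:M : 'M[R]_m))^T.

Definition Jdual n m (H : 'M[R]_(dimN n m)) (eps : R) (l : 'cV[R]_(dimN n m))
  : \bar R :=
  (((4%:R)^-1 * (l^T *m H *m l) 0 0 + (l^T *m Wvec n m eps) 0 0)%:E
   + indic (@Gamma_plus n) (blkQ l) + indic (@Gamma_plus n) (blkP l)
   + indic (@Gamma_plus m) (blkR l))%E.

(* BSUM iteration, each step written with the (unique) Euclidean projection *)
Definition bsum_step n m (H : 'M[R]_(dimN n m)) (eps : R)
  (l l' : 'cV[R]_(dimN n m)) : Prop :=
  let a := lambda_max (HQQ H) in
  let b := lambda_max (HPP H) in
  let c := lambda_max (HRR H) in
  [/\ is_proj (@Gamma_plus n)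
        (blkQ l - (2 * a)^-1 *: (HQQ H *m blkQ l + HQP H *m blkP l + HQR H *m blkR l))
        (blkQ l'),
      is_proj (@Gamma_plus n)
        (blkP l - (2 * b)^-1 *: (HPQ H *m blkQ l' + HPP H *m blkP l + HPR H *m blkR l)
                - b^-1 *: (mxvec (eps%:M : 'M[R]_n))^T)
        (blkP l') &
      is_proj (@Gamma_plus m)
        (blkR l - (2 * c)^-1 *: (HRQ H *m blkQ l' + HRP H *m blkP l' + HRR H *m blkR l)
                - c^-1 *: (mxvec (eps%:M : 'M[R]_m))^T)
        (blkR l')].

Definition is_minimizer n m (H : 'M[R]_(dimN n m)) (eps : R) (l : 'cV[R]_(dimN n m)) :=
  forall l', (Jdual H eps l <= Jdual H eps l')%E.

End Defs.

(* Each block update is a projected gradient step with step size 1 / a_X, where a_X is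
   the largest eigenvalue of the diagonal block H_XX.  The variational inequality of the
   projection gives the sufficient decrease J(λ^k) - J(λ^(k+1)) >= 3/4 Σ_X a_X |Δ_X|^2 and,
   together with Cauchy-Schwarz for the positive semidefinite forms a_X I - H_XX / 2 and H,
   the error bound J(λ^(k+1)) - J* <= s Σ_X a_X |λ^(k+1)_X - λ*_X|^2 + s^-1 Σ_X a_X |Δ_X|^2
   for every s > 0.  Optimising over s and using a_X <= |H| and |λ^(k+1) - λ*| <= 𝓡 yields
   D_(k+1)^2 <= 9 |H| 𝓡^2 (D_k - D_(k+1)) for the gaps D_k = J(λ^k) - J*, and this
   recurrence forces D_k <= c / (σ k) by induction on k. *)

From HB Require Import structures.
From mathcomp Require Import all_boot all_order all_algebra.
From mathcomp Require Import boolp classical_sets reals constructive_ereal.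
From mathcomp Require Import ring lra.
Import Order.TTheory GRing.Theory Num.Theory.
Local Open Scope ring_scope.
Set Implicit Arguments. Unset Strict Implicit.

Lemma sqr_le_4mul_of_le_wsum (R : realFieldType) (x S T : R) :
  0 <= x -> 0 <= S -> 0 <= T ->
  (forall s, 0 < s -> x <= s * S + s^-1 * T) -> x ^+ 2 <= 4%:R * S * T.
Proof.
move=> x0 S0 T0 hx.
have [x_le0|x_gt0] := lerP x 0; first nra.
have [S_le0|S_gt0] := lerP S 0.
  have := hx ((T + 1) / x); rewrite divr_gt0 //; last lra.
  have -> : S = 0 by apply/le_anti; rewrite S_le0 S0.
  rewrite mulr0 add0r invf_div mulrAC.
  by rewrite ler_pdivlMr; lra.
have s_gt0 : 0 < x / (2%:R * S) by rewrite divr_gt0 // mulr_gt0.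
have := hx _ s_gt0.
have -> : x / (2%:R * S) * S = x / 2%:R by field; rewrite lt0r_neq0.
rewrite invf_div => h.
have := ler_wpM2l (ltW x_gt0) h.
have -> : x * (x / 2%:R + 2%:R * S / x * T) = x ^+ 2 / 2%:R + 2%:R * S * T.
  by field; rewrite lt0r_neq0.
lra.
Qed.

Section Rate.
Variable R : realFieldType.

Lemma sqr_decrement_le (x y B B' s : R) : 0 < s -> 0 <= x -> 0 <= B' ->
  x ^+ 2 <= s * (y - x) -> y <= B -> s * B <= B' ^+ 2 + s * B' -> x <= B'.
Proof.
move=> s_gt0 x_ge0 B'_ge0 hx yB hB; rewrite leNgt; apply/negP => B'x.
have := ler_wpM2l (ltW s_gt0) yB; nra.
Qed.

Lemma rate_bound_base (c s : R) : 0 < s -> 2%:R <= c -> 4%:R * s^-1 - 2%:R <= c ->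
  s * c <= (c * s) ^+ 2 + s * (c * s).
Proof.
move=> s_gt0 c_ge2 c_ge; rewrite -subr_ge0.
have cs_ge : 4%:R - 2%:R * s <= c * s.
  have := ler_wpM2r (ltW s_gt0) c_ge.
  by rewrite mulrBl -mulrA mulVf ?lt0r_neq0 // mulr1 mulrC.
have -> : (c * s) ^+ 2 + s * (c * s) - s * c = c * s * (c * s + s - 1) by ring.
have cs_ge2s := ler_wpM2r (ltW s_gt0) c_ge2.
by rewrite mulr_ge0 ?mulr_ge0 //; lra.
Qed.

Lemma rate_bound_succ (c s K : R) : 0 < s -> 2%:R <= c -> 1 <= K ->
  s * (c * (s / K)) <= (c * (s / (K + 1))) ^+ 2 + s * (c * (s / (K + 1))).
Proof.
move=> s_gt0 c_ge2 K_ge1; rewrite -subr_ge0.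
have -> : (c * (s / (K + 1))) ^+ 2 + s * (c * (s / (K + 1))) - s * (c * (s / K)) =
    c * s ^+ 2 * (c * K - K - 1) / (K * (K + 1) ^+ 2).
  by field; rewrite !lt0r_neq0 //; lra.
by rewrite divr_ge0 ?mulr_ge0 ?exprn_ge0 //; nra.
Qed.

Lemma sublinear_rate (D : nat -> R) (s : R) : 0 <= s -> (forall k, 0 <= D k) ->
  (forall k, D k.+1 ^+ 2 <= s * (D k - D k.+1)) ->
  forall k, (1 <= k)%N ->
  D k <= Num.max (Num.max (4%:R * s^-1 - 2%:R) (D 0%N)) 2%:R * (s / k%:R).
Proof.
move=> s_ge0 D_ge0 D_rec; set c := Num.max _ _.
have c_ge2 : 2%:R <= c by rewrite le_max lexx orbT.
have c_geD : D 0%N <= c by rewrite !le_max lexx orbT.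
have c_ge4 : 4%:R * s^-1 - 2%:R <= c by rewrite !le_max lexx.
have [s_eq0|s_neq0] := eqVneq s 0.
  (* then s^-1 = 0, and the recurrence forces D k = 0 for k >= 1 *)
  case=> // k _; have := D_rec k; have := D_ge0 k.+1.
  by rewrite s_eq0 !mul0r mulr0; nra.
have s_gt0 : 0 < s by rewrite lt_def s_neq0.
have c_ge0 : 0 <= c by apply: le_trans c_ge2; rewrite ler0n.
have bound k : D k.+1 <= c * (s / k.+1%:R).
  elim: k => [|k IH].
    apply: (sqr_decrement_le s_gt0 (D_ge0 _) _ (D_rec 0) c_geD).
      by apply: mulr_ge0; rewrite // divr_ge0 ?ltW.
    by rewrite divr1 rate_bound_base.
  apply: (sqr_decrement_le s_gt0 (D_ge0 _) _ (D_rec k.+1) IH).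
    by apply: mulr_ge0; rewrite // divr_ge0 ?ltW.
  have -> : k.+2%:R = k.+1%:R + 1 :> R by rewrite natr1.
  by rewrite rate_bound_succ // ler1n.
by case=> // k _; apply: bound.
Qed.

End Rate.

Section DotProduct.
Variables (R : realType) (p : nat).
Implicit Types u v w : 'cV[R]_p.

Definition dot u v : R := (u^T *m v) 0 0.

Lemma dotE u v : dot u v = \sum_i u i 0 * v i 0.
Proof. by rewrite /dot !mxE; apply: eq_bigr => i _; rewrite !mxE. Qed.

Lemma dotC u v : dot u v = dot v u.
Proof. by rewrite !dotE; apply: eq_bigr => i _; rewrite mulrC. Qed.

Lemma dotDl u v w : dot (u + v) w = dot u w + dot v w.
Proof. by rewrite !dotE -big_split; apply: eq_bigr => i _; rewrite !mxE mulrDl. Qed.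

Lemma dotZl a u v : dot (a *: u) v = a * dot u v.
Proof. by rewrite !dotE mulr_sumr; apply: eq_bigr => i _; rewrite !mxE mulrA. Qed.

Lemma dotNl u v : dot (- u) v = - dot u v.
Proof. by rewrite -scaleN1r dotZl mulN1r. Qed.

Lemma dotBl u v w : dot (u - v) w = dot u w - dot v w.
Proof. by rewrite dotDl dotNl. Qed.

Lemma dotDr u v w : dot u (v + w) = dot u v + dot u w.
Proof. by rewrite dotC dotDl !(dotC u). Qed.

Lemma dotZr a u v : dot u (a *: v) = a * dot u v.
Proof. by rewrite dotC dotZl dotC. Qed.

Lemma dotNr u v : dot u (- v) = - dot u v.
Proof. by rewrite dotC dotNl dotC. Qed.

Lemma dotBr u v w : dot u (v - w) = dot u v - dot u w.
Proof. by rewrite dotC dotBl !(dotC u). Qed.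

Lemma dot0r u : dot u 0 = 0.
Proof. by rewrite /dot mulmx0 mxE. Qed.

Lemma dot_ge0 v : 0 <= dot v v.
Proof. by rewrite dotE sumr_ge0 // => i _; rewrite -expr2 sqr_ge0. Qed.

Lemma dot_eq0 v : (dot v v == 0) = (v == 0).
Proof.
apply/idP/eqP => [|->]; last by rewrite dot0r.
rewrite dotE psumr_eq0 => [/allP v0|i _]; last by rewrite -expr2 sqr_ge0.
apply/matrixP => i j; rewrite (ord1 j) mxE.
by have /(_ (mem_index_enum i))/implyP/(_ isT) := v0 i; rewrite mulf_eq0 orbb => /eqP.
Qed.

Lemma enormE v : enorm v = Num.sqrt (dot v v).
Proof. by rewrite /enorm dotE; congr Num.sqrt; apply: eq_bigr => i _; rewrite expr2. Qed.

Lemma enorm_ge0 v : 0 <= enorm v.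
Proof. exact: sqrtr_ge0. Qed.

Lemma sqr_enorm v : enorm v ^+ 2 = dot v v.
Proof. by rewrite enormE sqr_sqrtr ?dot_ge0. Qed.

End DotProduct.

Lemma dot_trmx (R : realType) p q (A : 'M[R]_(p, q)) u v :
  dot u (A *m v) = dot (A^T *m u) v.
Proof. by rewrite /dot trmx_mul trmxK mulmxA. Qed.

Lemma dot_mulmxl (R : realType) p q (A : 'M[R]_(p, q)) u v :
  dot (A *m u) v = dot u (A^T *m v).
Proof. by rewrite dotC dot_trmx dotC. Qed.

Section PsdForm.
Variables (R : realType) (p : nat) (A : 'M[R]_p).
Hypotheses (A_sym : A^T = A) (A_psd : forall u, 0 <= dot u (A *m u)).

Lemma dot_sym u v : dot u (A *m v) = dot v (A *m u).
Proof. by rewrite dot_trmx A_sym dotC. Qed.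

Lemma dot_form_shift t u v : dot (t *: u + v) (A *m (t *: u + v)) =
  t ^+ 2 * dot u (A *m u) + 2%:R * t * dot u (A *m v) + dot v (A *m v).
Proof.
rewrite mulmxDr -scalemxAr !(dotDl, dotDr, dotZl, dotZr) (dot_sym v u); ring.
Qed.

Lemma psd_cauchy_schwarz s u v : 0 < s ->
  2%:R * `|dot u (A *m v)| <= s * dot u (A *m u) + s^-1 * dot v (A *m v).
Proof.
move=> s_gt0.
have hp := A_psd (s *: u + v); have hn := A_psd ((- s) *: u + v).
rewrite dot_form_shift in hp; rewrite dot_form_shift in hn.
set Qu := dot u (A *m u) in hp hn *; set B := dot u (A *m v) in hp hn *.
set Qv := dot v (A *m v) in hp hn *.
have si_ge0 : 0 <= s^-1 by rewrite invr_ge0 ltW.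
have := mulr_ge0 si_ge0 hp; have := mulr_ge0 si_ge0 hn.
have -> : s^-1 * (s ^+ 2 * Qu + 2%:R * s * B + Qv) = s * Qu + 2%:R * B + s^-1 * Qv.
  by field; rewrite lt0r_neq0.
have -> : s^-1 * ((- s) ^+ 2 * Qu + 2%:R * (- s) * B + Qv) = s * Qu - 2%:R * B + s^-1 * Qv.
  by field; rewrite lt0r_neq0.
by case: (ger0P B) => hB; lra.
Qed.

End PsdForm.

Lemma dot_le_enorm (R : realType) p (u v : 'cV[R]_p) : dot u v <= enorm u * enorm v.
Proof.
have I_psd (w : 'cV[R]_p) : 0 <= dot w (1%:M *m w) by rewrite mul1mx dot_ge0.
have cs s : 0 < s -> 2%:R * `|dot u v| <= s * dot u u + s^-1 * dot v v.
  by move=> s_gt0; have := psd_cauchy_schwarz (trmx1 _ _) I_psd u v s_gt0; rewrite !mul1mx.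
have := sqr_le_4mul_of_le_wsum _ (dot_ge0 u) (dot_ge0 v) cs.
rewrite mulr_ge0 ?normr_ge0 // => /(_ isT) sq_le.
apply: le_trans (ler_norm _) _.
rewrite -(@ler_pXn2r _ 2) ?nnegrE ?mulr_ge0 ?normr_ge0 ?enorm_ge0 //.
rewrite exprMn real_normK ?num_real // in sq_le.
by rewrite exprMn !sqr_enorm real_normK ?num_real //; lra.
Qed.

Section Projection.
Variables (R : realType) (p : nat).
Implicit Types (C : set 'cV[R]_p) (x y z : 'cV[R]_p).

Definition convex_set C :=
  forall y z t, C y -> C z -> 0 <= t <= 1 -> C (y + t *: (z - y)).

Lemma is_proj_vi C x y z : convex_set C -> is_proj C x y -> C z ->
  dot (x - y) (z - y) <= 0.
Proof.
move=> C_cvx [Cy y_min] Cz.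
set b := dot (x - y) (z - y); set q := dot (z - y) (z - y).
have key t : 0 <= t <= 1 -> 2%:R * t * b <= t ^+ 2 * q.
  move=> t01; have := y_min _ (C_cvx y z t Cy Cz t01).
  rewrite !enormE ler_sqrt ?dot_ge0 //.
  have -> : x - (y + t *: (z - y)) = (x - y) - t *: (z - y) by rewrite opprD addrA.
  have expand u v : dot (u - t *: v) (u - t *: v) =
      dot u u - 2%:R * t * dot u v + t ^+ 2 * dot v v.
    by rewrite !(dotBl, dotBr, dotZl, dotZr) (dotC v u); ring.
  by rewrite expand -/b -/q; lra.
(* if b > 0, the step t = b / (b + q) in (0, 1] would beat the projection *)
rewrite leNgt; apply/negP => b_gt0.
have q_ge0 : 0 <= q := dot_ge0 _.
have bq_gt0 : 0 < b + q by lra.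
set t := b / (b + q).
have t_gt0 : 0 < t by rewrite divr_gt0.
have t_le1 : t <= 1 by rewrite ler_pdivrMr // mul1r; lra.
have tq_le : t * q <= b.
  by rewrite mulrAC ler_pdivrMr // ler_pM2l //; lra.
have := key t; rewrite (ltW t_gt0) t_le1 => /(_ isT); nra.
Qed.

End Projection.

Lemma Gamma_plus_convex (R : realType) k : convex_set (@Gamma_plus R k).
Proof.
move=> _ _ t [Y [[YT Y_psd] ->]] [Z [[ZT Z_psd] ->]] /andP[t_ge0 t_le1].
exists (Y + t *: (Z - Y)); split; last by rewrite !linearD /= !linearZ /= !linearN.
split; first by rewrite !linearD /= !linearZ /= !linearN /= YT ZT.
move=> u.
have -> : (u^T *m (Y + t *: (Z - Y)) *m u) 0 0 =
    (1 - t) * (u^T *m Y *m u) 0 0 + t * (u^T *m Z *m u) 0 0.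
  rewrite mulmxDr mulmxDl -scalemxAr -scalemxAl mulmxBr mulmxBl !mxE; ring.
have := Y_psd u; have := Z_psd u; nra.
Qed.

Lemma nonempty_of_sup_gt0 (R : realType) (S : set R) : 0 < sup S -> (S !=set0)%classic.
Proof.
move=> S_gt0; apply/set0P/eqP => S0.
by move: S_gt0; rewrite S0 sup0 ltxx.
Qed.

Section Spectral.
Variable R : realType.

Lemma quadE p (A : 'M[R]_p) x : (x^T *m A *m x) 0 0 = dot x (A *m x).
Proof. by rewrite /dot mulmxA. Qed.

Lemma entry_le1 p (x : 'cV[R]_p) i : dot x x <= 1 -> `|x i 0| <= 1.
Proof.
move=> x_le1; rewrite -(@ler_pXn2r _ 2) ?nnegrE // expr1n real_normK ?num_real //.
apply: le_trans x_le1; rewrite dotE (bigD1 i) //= expr2 lerDl.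
by rewrite sumr_ge0 // => j _; rewrite -expr2 sqr_ge0.
Qed.

Lemma mulmx_entry_le p q (A : 'M[R]_(q, p)) x i : dot x x <= 1 ->
  `|(A *m x) i 0| <= \sum_j `|A i j|.
Proof.
move=> x_le1; rewrite mxE; apply: le_trans (ler_norm_sum _ _ _) _.
by apply: ler_sum => j _; rewrite normrM ler_piMr ?normr_ge0 ?entry_le1.
Qed.

Lemma rayleigh p (A : 'M[R]_p) x : 0 < lambda_max A ->
  dot x (A *m x) <= lambda_max A * dot x x.
Proof.
move=> lmax_gt0.
have ub y : enorm y = 1 -> dot y (A *m y) <= lambda_max A.
  move=> y1; apply: sup_upper_bound; last by exists y; rewrite ?quadE.
  split; first exact: nonempty_of_sup_gt0.
  exists (\sum_i \sum_j `|A i j|) => _ [z z1 <-].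
  have z_le1 : dot z z <= 1 by rewrite -sqr_enorm /= z1 expr1n.
  rewrite quadE dotE; apply: le_trans (ler_norm _) _.
  apply: le_trans (ler_norm_sum _ _ _) _; apply: ler_sum => i _.
  rewrite normrM -[X in _ <= X]mul1r ler_pM ?normr_ge0 ?entry_le1 //.
  exact: mulmx_entry_le.
have [->|x_neq0] := eqVneq x 0; first by rewrite mulmx0 !dot0r mulr0.
set r := enorm x.
have r_gt0 : 0 < r by rewrite /r enormE sqrtr_gt0 lt_def dot_eq0 x_neq0 dot_ge0.
have x_unit : enorm (r^-1 *: x) = 1.
  rewrite enormE !(dotZl, dotZr) mulrA -expr2 -sqr_enorm -/r exprVn.
  by rewrite mulVf ?sqrtr1 // expf_neq0 // lt0r_neq0.
have := ub _ x_unit; rewrite -scalemxAr !(dotZl, dotZr) mulrA -expr2 exprVn.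
by rewrite -sqr_enorm -/r mulrC ler_pdivrMr ?exprn_gt0.
Qed.

Lemma spec_norm_ge p q (A : 'M[R]_(q, p)) x : dot x x <= 1 -> enorm (A *m x) <= spec_norm A.
Proof.
move=> x_le1; apply: sup_upper_bound; last first.
  by exists x => //=; rewrite enormE -sqrtr1 ler_sqrt.
split; first by exists (enorm (A *m 0)), 0 => //=; rewrite enormE dot0r sqrtr0.
exists (Num.sqrt (\sum_i (\sum_j `|A i j|) ^+ 2)) => _ [y /= y_le1 <-].
have {}y_le1 : dot y y <= 1 by rewrite -sqr_enorm exprn_ile1 ?enorm_ge0.
rewrite /enorm ler_sqrt ?sumr_ge0 // => [|i _]; last exact: sqr_ge0.
apply: ler_sum => i _; rewrite -real_normK ?num_real //.
by rewrite lerXn2r ?nnegrE ?mulmx_entry_le ?sumr_ge0.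
Qed.

Lemma spec_norm_ge0 p q (A : 'M[R]_(q, p)) : 0 <= spec_norm A.
Proof. by apply: le_trans (enorm_ge0 _) (spec_norm_ge A (x := 0) _); rewrite dot0r. Qed.

Lemma lambda_max_le_spec_norm N p (H : 'M[R]_N) (E : 'M[R]_(N, p)) :
  E^T *m E = 1%:M -> 0 < lambda_max (E^T *m H *m E) ->
  lambda_max (E^T *m H *m E) <= spec_norm H.
Proof.
move=> E_iso lmax_gt0; apply: ge_sup; first exact: nonempty_of_sup_gt0.
move=> _ [y /= y1 <-].
have Ey1 : dot (E *m y) (E *m y) = 1.
  by rewrite dot_trmx mulmxA E_iso mul1mx -sqr_enorm y1 expr1n.
rewrite quadE -!mulmxA dot_trmx trmxK.
apply: le_trans (dot_le_enorm _ _) _.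
by rewrite enormE Ey1 sqrtr1 mul1r spec_norm_ge ?Ey1.
Qed.

End Spectral.

Section QuadraticObjective.
Variables (R : realType) (N : nat) (H : 'M[R]_N) (W : 'cV[R]_N).
Hypothesis H_sym : H^T = H.
Implicit Types l d : 'cV[R]_N.

Definition fdual l := 4%:R^-1 * dot l (H *m l) + dot l W.

Definition fdual_grad l := 2%:R^-1 *: (H *m l) + W.

Lemma fdual_shift l d :
  fdual (l + d) = fdual l + dot d (fdual_grad l) + 4%:R^-1 * dot d (H *m d).
Proof.
rewrite /fdual /fdual_grad mulmxDr !(dotDl, dotDr, dotZr) (dot_sym H_sym d l).
by field.
Qed.

Lemma fdual_grad_shift l d : fdual_grad (l + d) = fdual_grad l + 2%:R^-1 *: (H *m d).
Proof. by rewrite /fdual_grad mulmxDr scalerDr addrAC. Qed.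

Lemma dot_grad_shift p (E : 'M[R]_(N, p)) e l d :
  dot e (E^T *m fdual_grad (l + d)) =
  dot e (E^T *m fdual_grad l) + 2%:R^-1 * dot (E *m e) (H *m d).
Proof.
by rewrite fdual_grad_shift mulmxDr dotDr -scalemxAr dotZr -(dot_mulmxl E e (H *m d)).
Qed.

Hypothesis H_psd : forall u, 0 <= dot u (H *m u).

Lemma fdual_sub_le_grad l l' : fdual l - fdual l' <= dot (l - l') (fdual_grad l).
Proof.
have := fdual_shift l (l' - l); rewrite addrC subrK => ->.
have := H_psd (l' - l); rewrite -[l - l']opprB dotNl; lra.
Qed.

End QuadraticObjective.

Lemma dot_block_form (R : realType) N p q (H : 'M[R]_N) (E : 'M[R]_(N, p))
    (F : 'M[R]_(N, q)) x y :
  dot (E *m x) (H *m (F *m y)) = dot x (E^T *m H *m F *m y).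
Proof. by rewrite dotC dot_trmx dotC !mulmxA. Qed.

Section BlockUpdate.
Variables (R : realType) (N p : nat) (H : 'M[R]_N) (W : 'cV[R]_N) (E : 'M[R]_(N, p)).
Hypotheses (H_sym : H^T = H) (H_psd : forall u, 0 <= dot u (H *m u)).
Local Notation Hb := (E^T *m H *m E).
Local Notation a := (lambda_max Hb).
Hypothesis a_gt0 : 0 < a.

Lemma block_sym : Hb^T = Hb.
Proof. by rewrite !trmx_mul trmxK H_sym mulmxA. Qed.

Lemma block_psd x : 0 <= dot x (Hb *m x).
Proof. by rewrite -dot_block_form H_psd. Qed.

Variables (C : set 'cV[R]_p) (w : 'cV[R]_N) (y : 'cV[R]_p).
Hypotheses (C_cvx : convex_set C)
  (y_proj : is_proj C (E^T *m (w - a^-1 *: fdual_grad H W w)) y).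
Local Notation g := (E^T *m fdual_grad H W w).
Local Notation d := (y - E^T *m w).

Lemma block_vi z : C z -> dot g (y - z) + a * dot d (y - z) <= 0.
Proof.
move=> Cz; have := is_proj_vi C_cvx y_proj Cz.
have -> : E^T *m (w - a^-1 *: fdual_grad H W w) - y = - (a^-1 *: g + d).
  by rewrite mulmxBr -scalemxAr; apply/matrixP => i j; rewrite !mxE; ring.
rewrite -[z - y]opprB dotNl dotNr opprK => vi; rewrite dotDl dotZl in vi.
have : a * (a^-1 * dot g (y - z) + dot d (y - z)) <= 0 by rewrite pmulr_rle0.
by rewrite mulrDr mulrA mulfV ?lt0r_neq0 // mul1r.
Qed.

Lemma block_descent : C (E^T *m w) ->
  fdual H W (w + E *m d) <= fdual H W w - 3%:R / 4%:R * (a * dot d d).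
Proof.
move=> Cw; have vi := block_vi Cw.
rewrite fdual_shift // dot_mulmxl dot_block_form (dotC d).
have := rayleigh d a_gt0; lra.
Qed.

Lemma block_error z s : 0 < s -> C z ->
  dot (y - z) g + 2%:R^-1 * dot (E *m (y - z)) (H *m (E *m d)) <=
  2%:R^-1 * (s * (a * dot (y - z) (y - z)) + s^-1 * (a * dot d d)).
Proof.
(* Cauchy-Schwarz for the form a I - Hb / 2, which lies between 0 and a I *)
move=> s_gt0 Cz; have := block_vi Cz; rewrite dot_block_form.
set e := y - z => vi.
set B := a%:M - 2%:R^-1 *: Hb.
have B_dot u v : dot u (B *m v) = a * dot u v - 2%:R^-1 * dot u (Hb *m v).
  by rewrite mulmxBl mul_scalar_mx -scalemxAl dotBr !dotZr.
have B_le u : dot u (B *m u) <= a * dot u u by rewrite B_dot; have := block_psd u; lra.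
have B_sym : B^T = B by rewrite linearB /= linearZ /= tr_scalar_mx block_sym.
have B_psd u : 0 <= dot u (B *m u).
  rewrite B_dot; have := rayleigh u a_gt0; have := mulr_ge0 (ltW a_gt0) (dot_ge0 u); lra.
have := psd_cauchy_schwarz B_sym B_psd e d s_gt0.
have si_ge0 : 0 <= s^-1 by rewrite invr_ge0 ltW.
have := ler_wpM2l (ltW s_gt0) (B_le e); have := ler_wpM2l si_ge0 (B_le d).
have := ler_norm (- dot e (B *m d)); rewrite normrN B_dot.
rewrite (dotC g) (dotC d) in vi; lra.
Qed.

End BlockUpdate.

Lemma cross_block_le (R : realType) N p q (H : 'M[R]_N) (E : 'M[R]_(N, p))
    (F : 'M[R]_(N, q)) e d s :
  H^T = H -> (forall u, 0 <= dot u (H *m u)) ->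
  0 < lambda_max (E^T *m H *m E) -> 0 < lambda_max (F^T *m H *m F) -> 0 < s ->
  2%:R * `|dot (E *m e) (H *m (F *m d))| <=
  s * (lambda_max (E^T *m H *m E) * dot e e) + s^-1 * (lambda_max (F^T *m H *m F) * dot d d).
Proof.
move=> H_sym H_psd aE_gt0 aF_gt0 s_gt0.
apply: le_trans (psd_cauchy_schwarz H_sym H_psd _ _ s_gt0) _.
by rewrite !dot_block_form; apply: lerD; rewrite ler_pM2l ?invr_gt0 // rayleigh.
Qed.

Section Selection.
Variables (R : pzRingType) (m1 m2 : nat).

Definition lsel : 'M[R]_(m1 + m2, m1) := col_mx 1%:M 0.
Definition rsel : 'M[R]_(m1 + m2, m2) := col_mx 0 1%:M.

Lemma usubmx_sel k (A : 'M[R]_(m1 + m2, k)) : usubmx A = lsel^T *m A.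
Proof.
by rewrite /lsel tr_col_mx -{2}(vsubmxK A) mul_row_col trmx1 trmx0 mul1mx mul0mx addr0.
Qed.

Lemma dsubmx_sel k (A : 'M[R]_(m1 + m2, k)) : dsubmx A = rsel^T *m A.
Proof.
by rewrite /rsel tr_col_mx -{2}(vsubmxK A) mul_row_col trmx1 trmx0 mul1mx mul0mx add0r.
Qed.

Lemma lsubmx_sel k (A : 'M[R]_(k, m1 + m2)) : lsubmx A = A *m lsel.
Proof. by rewrite /lsel -{2}(hsubmxK A) mul_row_col mulmx1 mulmx0 addr0. Qed.

Lemma rsubmx_sel k (A : 'M[R]_(k, m1 + m2)) : rsubmx A = A *m rsel.
Proof. by rewrite /rsel -{2}(hsubmxK A) mul_row_col mulmx1 mulmx0 add0r. Qed.

Lemma lsel_iso : lsel^T *m lsel = 1%:M.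
Proof. by rewrite -usubmx_sel col_mxKu. Qed.

Lemma rsel_iso : rsel^T *m rsel = 1%:M.
Proof. by rewrite -dsubmx_sel col_mxKd. Qed.

Lemma lsel_rsel : lsel^T *m rsel = 0.
Proof. by rewrite -usubmx_sel col_mxKu. Qed.

Lemma rsel_lsel : rsel^T *m lsel = 0.
Proof. by rewrite -dsubmx_sel col_mxKd. Qed.

Lemma sel_resolution k (A : 'M[R]_(m1 + m2, k)) :
  lsel *m (lsel^T *m A) + rsel *m (rsel^T *m A) = A.
Proof.
rewrite -usubmx_sel -dsubmx_sel /lsel /rsel !mul_col_mx !mul1mx !mul0mx.
by rewrite add_col_mx addr0 add0r vsubmxK.
Qed.

End Selection.

Arguments lsel {R m1 m2}.
Arguments rsel {R m1 m2}.

Lemma trmx_mul_iso (R : comPzRingType) p q r k (A : 'M[R]_(p, q)) (B : 'M[R]_(q, r))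
    (C : 'M[R]_(q, k)) :
  A^T *m A = 1%:M -> (A *m B)^T *m (A *m C) = B^T *m C.
Proof. by move=> A_iso; rewrite trmx_mul -mulmxA (mulmxA A^T) A_iso mul1mx. Qed.

(* λ = (λ_Q; λ_P; λ_R) is split by the isometric embeddings EQ, EP, ER of the three
   blocks: blkX v = EX^T v and HXY H = EX^T H EY. *)
Section Blocks.
Variables (R : realType) (n m : nat).
Local Notation N := (dimN n m).

Definition EQ : 'M[R]_(N, n * n) := lsel *m lsel.
Definition EP : 'M[R]_(N, n * n) := lsel *m rsel.
Definition ER : 'M[R]_(N, m * m) := rsel.

Lemma blkQE (v : 'cV[R]_N) : blkQ v = EQ^T *m v.
Proof. by rewrite /blkQ !usubmx_sel /EQ trmx_mul mulmxA. Qed.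

Lemma blkPE (v : 'cV[R]_N) : blkP v = EP^T *m v.
Proof. by rewrite /blkP dsubmx_sel usubmx_sel /EP trmx_mul mulmxA. Qed.

Lemma blkRE (v : 'cV[R]_N) : blkR v = ER^T *m v.
Proof. by rewrite /blkR dsubmx_sel. Qed.

Lemma EQ_iso : EQ^T *m EQ = 1%:M.
Proof. by rewrite trmx_mul_iso lsel_iso. Qed.

Lemma EP_iso : EP^T *m EP = 1%:M.
Proof. by rewrite trmx_mul_iso (lsel_iso, rsel_iso). Qed.

Lemma ER_iso : ER^T *m ER = 1%:M.
Proof. exact: rsel_iso. Qed.

Lemma EP_EQ : EP^T *m EQ = 0.
Proof. by rewrite trmx_mul_iso (lsel_iso, rsel_lsel). Qed.

Lemma ER_EQ : ER^T *m EQ = 0.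
Proof. by rewrite /ER /EQ mulmxA rsel_lsel mul0mx. Qed.

Lemma EQ_EP : EQ^T *m EP = 0.
Proof. by rewrite trmx_mul_iso (lsel_iso, lsel_rsel). Qed.

Lemma ER_EP : ER^T *m EP = 0.
Proof. by rewrite /ER /EP mulmxA rsel_lsel mul0mx. Qed.

Lemma blkQD (u v : 'cV[R]_N) : blkQ (u + v) = blkQ u + blkQ v.
Proof. by rewrite !blkQE mulmxDr. Qed.

Lemma blkPD (u v : 'cV[R]_N) : blkP (u + v) = blkP u + blkP v.
Proof. by rewrite !blkPE mulmxDr. Qed.

Lemma blkRD (u v : 'cV[R]_N) : blkR (u + v) = blkR u + blkR v.
Proof. by rewrite !blkRE mulmxDr. Qed.

Lemma blkQB (u v : 'cV[R]_N) : blkQ (u - v) = blkQ u - blkQ v.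
Proof. by rewrite !blkQE mulmxBr. Qed.

Lemma blkPB (u v : 'cV[R]_N) : blkP (u - v) = blkP u - blkP v.
Proof. by rewrite !blkPE mulmxBr. Qed.

Lemma blkRB (u v : 'cV[R]_N) : blkR (u - v) = blkR u - blkR v.
Proof. by rewrite !blkRE mulmxBr. Qed.

Lemma blk_EQ x : [/\ blkQ (EQ *m x) = x, blkP (EQ *m x) = 0 & blkR (EQ *m x) = 0].
Proof.
rewrite blkQE blkPE blkRE (mulmxA EQ^T) (mulmxA EP^T) (mulmxA ER^T).
by rewrite EQ_iso EP_EQ ER_EQ mul1mx !mul0mx.
Qed.

Lemma blk_EP x : [/\ blkQ (EP *m x) = 0, blkP (EP *m x) = x & blkR (EP *m x) = 0].
Proof.
rewrite blkQE blkPE blkRE (mulmxA EQ^T) (mulmxA EP^T) (mulmxA ER^T).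
by rewrite EQ_EP EP_iso ER_EP mul1mx !mul0mx.
Qed.

Lemma blk_resolution k (A : 'M[R]_(N, k)) :
  EQ *m (EQ^T *m A) + EP *m (EP^T *m A) + ER *m (ER^T *m A) = A.
Proof.
rewrite /EQ /EP /ER !trmx_mul -!mulmxA.
by rewrite -mulmxDr sel_resolution sel_resolution.
Qed.

Lemma dot_blk (u v : 'cV[R]_N) :
  dot u v = dot (blkQ u) (blkQ v) + dot (blkP u) (blkP v) + dot (blkR u) (blkR v).
Proof.
by rewrite !(blkQE, blkPE, blkRE) -!dot_mulmxl -!dotDl blk_resolution.
Qed.

Variable H : 'M[R]_N.

Local Ltac blocksE := rewrite /HQQ /HQP /HQR /HPQ /HPP /HPR /HRQ /HRP /HRR
  /ulsubmx /ursubmx /dlsubmx /drsubmx /blkQ /blkP /blkR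
  !(lsubmx_sel, rsubmx_sel, usubmx_sel, dsubmx_sel) /EQ /EP /ER ?trmx_mul ?mulmxA.

Lemma HQQE : HQQ H = EQ^T *m H *m EQ.
Proof. by blocksE. Qed.

Lemma HPPE : HPP H = EP^T *m H *m EP.
Proof. by blocksE. Qed.

Lemma HRRE : HRR H = ER^T *m H *m ER.
Proof. by blocksE. Qed.

Lemma EQ_mulmx (v : 'cV[R]_N) :
  HQQ H *m (EQ^T *m v) + HQP H *m (EP^T *m v) + HQR H *m (ER^T *m v) = EQ^T *m (H *m v).
Proof. by rewrite -[in RHS](blk_resolution v); blocksE; rewrite !mulmxDr !mulmxA. Qed.

Lemma EP_mulmx (v : 'cV[R]_N) :
  HPQ H *m (EQ^T *m v) + HPP H *m (EP^T *m v) + HPR H *m (ER^T *m v) = EP^T *m (H *m v).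
Proof. by rewrite -[in RHS](blk_resolution v); blocksE; rewrite !mulmxDr !mulmxA. Qed.

Lemma ER_mulmx (v : 'cV[R]_N) :
  HRQ H *m (EQ^T *m v) + HRP H *m (EP^T *m v) + HRR H *m (ER^T *m v) = ER^T *m (H *m v).
Proof. by rewrite -[in RHS](blk_resolution v); blocksE; rewrite !mulmxDr !mulmxA. Qed.

End Blocks.

Arguments EQ {R n m}.
Arguments EP {R n m}.
Arguments ER {R n m}.
Arguments EQ_iso {R n m}.
Arguments EP_iso {R n m}.
Arguments ER_iso {R n m}.
Arguments blk_EQ {R n m} x.
Arguments blk_EP {R n m} x.

Lemma indic_in (R : realType) T (C : set T) x : C x -> @indic R T C x = 0%E.
Proof. by rewrite /indic; case: pselect. Qed.

Section Feasibility.
Variables (R : realType) (n m : nat) (H : 'M[R]_(dimN n m)) (eps : R).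
Implicit Types l : 'cV[R]_(dimN n m).

Definition feasible l :=
  [/\ Gamma_plus (blkQ l), Gamma_plus (blkP l) & Gamma_plus (blkR l)].

Lemma Jdual_feasible l : feasible l -> Jdual H eps l = (fdual H (Wvec n m eps) l)%:E.
Proof.
by case=> lQ lP lR; rewrite /Jdual !indic_in // !adde0 /fdual -!quadE.
Qed.

Lemma feasible_of_Jdual_lt l : (Jdual H eps l < +oo)%E -> feasible l.
Proof.
rewrite /Jdual /indic.
by case: pselect => ?; case: pselect => ?; case: pselect => ? //=; rewrite ?adde0 ?ltxx.
Qed.

End Feasibility.

Section BsumStep.
Variables (R : realType) (n m : nat) (H : 'M[R]_(dimN n m)) (eps : R).
Local Notation N := (dimN n m).
Local Notation W := (Wvec n m eps).
Local Notation f := (fdual H W).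
Local Notation G := (fdual_grad H W).

Definition blk_sqnorm (v : 'cV[R]_N) :=
  lambda_max (HQQ H) * dot (blkQ v) (blkQ v) + lambda_max (HPP H) * dot (blkP v) (blkP v)
  + lambda_max (HRR H) * dot (blkR v) (blkR v).

Lemma EQ_W : EQ^T *m W = 0.
Proof. by rewrite -blkQE /blkQ /Wvec !col_mxKu. Qed.

Lemma EP_W : EP^T *m W = (mxvec (eps%:M : 'M[R]_n))^T.
Proof. by rewrite -blkPE /blkP /Wvec col_mxKu col_mxKd. Qed.

Lemma ER_W : ER^T *m W = (mxvec (eps%:M : 'M[R]_m))^T.
Proof. by rewrite -blkRE /blkR /Wvec col_mxKd. Qed.

Lemma bsum_proj_argE p (E : 'M[R]_(N, p)) v s :
  E^T *m v - (2%:R * s)^-1 *: (E^T *m (H *m v)) - s^-1 *: (E^T *m W) =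
  E^T *m (v - s^-1 *: G v).
Proof.
rewrite /fdual_grad mulmxBr -scalemxAr mulmxDr -scalemxAr scalerDr scalerA.
by rewrite opprD addrA invfM (mulrC s^-1).
Qed.

Hypotheses (H_sym : H^T = H) (H_psd : forall u, 0 <= dot u (H *m u)).
Hypotheses (aQ_gt0 : 0 < lambda_max (HQQ H)) (aP_gt0 : 0 < lambda_max (HPP H))
  (aR_gt0 : 0 < lambda_max (HRR H)).

Lemma blk_sqnorm_ge0 v : 0 <= blk_sqnorm v.
Proof. by rewrite /blk_sqnorm !addr_ge0 // mulr_ge0 ?dot_ge0 // ltW. Qed.

Lemma blk_sqnorm_le v : blk_sqnorm v <= spec_norm H * dot v v.
Proof.
move: aQ_gt0 aP_gt0 aR_gt0; rewrite /blk_sqnorm dot_blk HQQE HPPE HRRE !mulrDr => aQ aP aR.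
by rewrite !lerD // ler_wpM2r ?dot_ge0 // lambda_max_le_spec_norm // (EQ_iso, EP_iso, ER_iso).
Qed.

Variables (l l' : 'cV[R]_N).
Hypothesis step : bsum_step H eps l l'.

(* The points of the Gauss-Seidel sweep from l to l' after updating block Q, then P. *)
Local Notation uQ := (l + EQ *m (blkQ l' - blkQ l)).
Local Notation uQP := (uQ + EP *m (blkP l' - blkP l)).

Lemma uQ_blocks : [/\ blkQ uQ = blkQ l', blkP uQ = blkP l & blkR uQ = blkR l].
Proof.
rewrite blkQD blkPD blkRD; have [-> -> ->] := blk_EQ (m := m) (blkQ l' - blkQ l).
by rewrite !addr0 addrC subrK.
Qed.

Lemma uQP_blocks : [/\ blkQ uQP = blkQ l', blkP uQP = blkP l' & blkR uQP = blkR l].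
Proof.
have [uQ_Q uQ_P uQ_R] := uQ_blocks.
rewrite blkQD blkPD blkRD uQ_Q uQ_P uQ_R; have [-> -> ->] := blk_EP (m := m) (blkP l' - blkP l).
by rewrite !addr0 addrC subrK.
Qed.

Lemma uQP_updateR : uQP + ER *m (blkR l' - blkR l) = l'.
Proof.
rewrite !(blkQE, blkPE, blkRE) -!mulmxBr -!addrA (addrA (EQ *m _)).
by rewrite blk_resolution addrC subrK.
Qed.

Lemma bsum_projQ :
  is_proj (@Gamma_plus R n) (EQ^T *m (l - (lambda_max (EQ^T *m H *m EQ))^-1 *: G l))
    (EQ^T *m l').
Proof.
case: step => + _ _.
by rewrite !(blkQE, blkPE, blkRE) EQ_mulmx HQQE -(bsum_proj_argE EQ) EQ_W scaler0 subr0.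
Qed.

Lemma bsum_projP :
  is_proj (@Gamma_plus R n) (EP^T *m (uQ - (lambda_max (EP^T *m H *m EP))^-1 *: G uQ))
    (EP^T *m l').
Proof.
move: uQ_blocks; case: step => _ + _; move: (uQ) => w hP [wQ wP wR].
rewrite -wQ -wP -wR !(blkQE, blkPE, blkRE) EP_mulmx HPPE -EP_W in hP.
by rewrite -(bsum_proj_argE EP).
Qed.

Lemma bsum_projR :
  is_proj (@Gamma_plus R m) (ER^T *m (uQP - (lambda_max (ER^T *m H *m ER))^-1 *: G uQP))
    (ER^T *m l').
Proof.
move: uQP_blocks; case: step => _ _; move: (uQP) => w hR [wQ wP wR].
rewrite -wQ -wP -wR !(blkQE, blkPE, blkRE) ER_mulmx HRRE -ER_W in hR.
by rewrite -(bsum_proj_argE ER).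
Qed.

Lemma bsum_feasible : feasible l'.
Proof.
split; rewrite ?blkQE ?blkPE ?blkRE.
- by case: bsum_projQ.
- by case: bsum_projP.
- by case: bsum_projR.
Qed.

Lemma bsum_descent : feasible l -> f l' <= f l - 3%:R / 4%:R * blk_sqnorm (l' - l).
Proof.
move=> [lQ lP lR]; have [_ uQ_P _] := uQ_blocks; have [_ _ uQP_R] := uQP_blocks.
move: aQ_gt0 aP_gt0 aR_gt0; rewrite HQQE HPPE HRRE => aQ aP aR.
have cvx k := @Gamma_plus_convex R k.
have := block_descent H_sym aQ (cvx n) bsum_projQ.
have := block_descent H_sym aP (cvx n) bsum_projP.
have := block_descent H_sym aR (cvx m) bsum_projR.
rewrite -!(blkQE, blkPE, blkRE) uQ_P uQP_R uQP_updateR.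
move=> /(_ lR) descR /(_ lP) descP /(_ lQ) descQ.
rewrite /blk_sqnorm HQQE HPPE HRRE blkQB blkPB blkRB; lra.
Qed.

Local Notation dQ := (blkQ l' - blkQ l).
Local Notation dP := (blkP l' - blkP l).
Local Notation dR := (blkR l' - blkR l).

Variable ls : 'cV[R]_N.

Local Notation eQ := (blkQ l' - blkQ ls).
Local Notation eP := (blkP l' - blkP ls).
Local Notation eR := (blkR l' - blkR ls).

Lemma bsum_grad_split : dot (l' - ls) (G l') =
  (dot eQ (blkQ (G l)) + 2%:R^-1 * dot (EQ *m eQ) (H *m (EQ *m dQ)))
  + (dot eP (blkP (G uQ)) + 2%:R^-1 * dot (EP *m eP) (H *m (EP *m dP)))
  + (dot eR (blkR (G uQP)) + 2%:R^-1 * dot (ER *m eR) (H *m (ER *m dR)))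
  + 2%:R^-1 * (dot (EQ *m eQ) (H *m (EP *m dP)) + dot (EQ *m eQ) (H *m (ER *m dR))
               + dot (EP *m eP) (H *m (ER *m dR))).
Proof.
have gQ := dot_grad_shift H W EQ eQ l (EQ *m dQ + EP *m dP + ER *m dR).
have gP := dot_grad_shift H W EP eP uQ (EP *m dP + ER *m dR).
have gR := dot_grad_shift H W ER eR uQP (ER *m dR).
rewrite !addrA uQP_updateR -!(blkQE, blkPE, blkRE) in gQ gP gR.
rewrite dot_blk blkQB blkPB blkRB gQ gP gR !(mulmxDr H) !dotDr; ring.
Qed.

Lemma bsum_error s : feasible ls -> 0 < s ->
  f l' - f ls <= s * blk_sqnorm (l' - ls) + s^-1 * blk_sqnorm (l' - l).
Proof.
move=> [lsQ lsP lsR] s_gt0; have [_ uQ_P _] := uQ_blocks; have [_ _ uQP_R] := uQP_blocks.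
move: aQ_gt0 aP_gt0 aR_gt0; rewrite HQQE HPPE HRRE => aQ aP aR.
have cvx k := @Gamma_plus_convex R k.
have := block_error H_sym H_psd aQ (cvx n) bsum_projQ (z := EQ^T *m ls) s_gt0.
have := block_error H_sym H_psd aP (cvx n) bsum_projP (z := EP^T *m ls) s_gt0.
have := block_error H_sym H_psd aR (cvx m) bsum_projR (z := ER^T *m ls) s_gt0.
rewrite -!(blkQE, blkPE, blkRE) uQ_P uQP_R.
move=> /(_ lsR) errR /(_ lsP) errP /(_ lsQ) errQ.
have cQP := cross_block_le eQ dP H_sym H_psd aQ aP s_gt0.
have cQR := cross_block_le eQ dR H_sym H_psd aQ aR s_gt0.
have cPR := cross_block_le eP dR H_sym H_psd aP aR s_gt0.
have nQP := ler_norm (dot (EQ *m eQ) (H *m (EP *m dP))).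
have nQR := ler_norm (dot (EQ *m eQ) (H *m (ER *m dR))).
have nPR := ler_norm (dot (EP *m eP) (H *m (ER *m dR))).
have si_ge0 : 0 <= s^-1 by rewrite invr_ge0 ltW.
have eP_ge0 := mulr_ge0 (ltW s_gt0) (mulr_ge0 (ltW aP) (dot_ge0 eP)).
have eR_ge0 := mulr_ge0 (ltW s_gt0) (mulr_ge0 (ltW aR) (dot_ge0 eR)).
have dQ_ge0 := mulr_ge0 si_ge0 (mulr_ge0 (ltW aQ) (dot_ge0 dQ)).
have dP_ge0 := mulr_ge0 si_ge0 (mulr_ge0 (ltW aP) (dot_ge0 dP)).
apply: le_trans (fdual_sub_le_grad W H_sym H_psd l' ls) _.
rewrite bsum_grad_split /blk_sqnorm HQQE HPPE HRRE !(blkQB, blkPB, blkRB); lra.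
Qed.

End BsumStep.


Section Convergence.
Variables (R : realType) (n m : nat) (H : 'M[R]_(dimN n m)) (eps : R).
Variables (lam : nat -> 'cV[R]_(dimN n m)) (lstar : 'cV[R]_(dimN n m)) (Rad : R).
Hypotheses (H_sym : H^T = H) (H_psd : forall u, 0 <= dot u (H *m u)).
Hypotheses (aQ_gt0 : 0 < lambda_max (HQQ H)) (aP_gt0 : 0 < lambda_max (HPP H))
  (aR_gt0 : 0 < lambda_max (HRR H)).
Hypotheses (lstar_min : is_minimizer H eps lstar) (lam0_fin : (Jdual H eps (lam 0%N) < +oo)%E)
  (step : forall k, bsum_step H eps (lam k) (lam k.+1)).
Hypothesis Rad_ub : forall l l', (Jdual H eps l <= Jdual H eps (lam 0%N))%E ->
  is_minimizer H eps l' -> enorm (l - l') <= Rad.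
Local Notation f := (fdual H (Wvec n m eps)).

Lemma bsum_iter_feasible k : feasible (lam k).
Proof.
case: k => [|k]; first exact: feasible_of_Jdual_lt lam0_fin.
exact: bsum_feasible (step k).
Qed.

Lemma minimizer_feasible : feasible lstar.
Proof. exact: feasible_of_Jdual_lt (le_lt_trans (lstar_min _) lam0_fin). Qed.

Lemma bsum_iter_decr k : f (lam k.+1) <= f (lam k).
Proof.
have := bsum_descent H_sym aQ_gt0 aP_gt0 aR_gt0 (step k) (bsum_iter_feasible k).
have := blk_sqnorm_ge0 aQ_gt0 aP_gt0 aR_gt0 (lam k.+1 - lam k); lra.
Qed.

Lemma bsum_iter_le0 k : f (lam k) <= f (lam 0%N).
Proof. by elim: k => // k IH; apply: le_trans (bsum_iter_decr k) IH. Qed.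

Lemma minimizer_le k : f lstar <= f (lam k).
Proof.
move: (lstar_min (lam k)).
by rewrite (Jdual_feasible _ _ minimizer_feasible) (Jdual_feasible _ _ (bsum_iter_feasible k)).
Qed.

Lemma bsum_gap_recurrence k :
  (f (lam k.+1) - f lstar) ^+ 2 <=
  9%:R * spec_norm H * Rad ^+ 2 * ((f (lam k) - f lstar) - (f (lam k.+1) - f lstar)).
Proof.
set S := blk_sqnorm H (lam k.+1 - lstar); set T := blk_sqnorm H (lam k.+1 - lam k).
have S_ge0 : 0 <= S := blk_sqnorm_ge0 aQ_gt0 aP_gt0 aR_gt0 _.
have T_ge0 : 0 <= T := blk_sqnorm_ge0 aQ_gt0 aP_gt0 aR_gt0 _.
have gap_ge0 : 0 <= f (lam k.+1) - f lstar by rewrite subr_ge0 minimizer_le.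
(* minimising the error bound over s, then 4 * 4/3 <= 9 *)
have gap_le := sqr_le_4mul_of_le_wsum gap_ge0 S_ge0 T_ge0
  (fun s s_gt0 => bsum_error H_sym H_psd aQ_gt0 aP_gt0 aR_gt0 (step k) minimizer_feasible s_gt0).
have dist : dot (lam k.+1 - lstar) (lam k.+1 - lstar) <= Rad ^+ 2.
  have /Rad_ub /(_ lstar_min) le_Rad : (Jdual H eps (lam k.+1) <= Jdual H eps (lam 0%N))%E.
    by rewrite !(Jdual_feasible _ _ (bsum_iter_feasible _)) lee_fin bsum_iter_le0.
  rewrite -sqr_enorm lerXn2r ?nnegrE ?enorm_ge0 //; exact: le_trans (enorm_ge0 _) le_Rad.
have S_le : S <= spec_norm H * Rad ^+ 2.
  exact: le_trans (blk_sqnorm_le aQ_gt0 aP_gt0 aR_gt0 _) (ler_wpM2l (spec_norm_ge0 H) dist).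
have T_le : T <= 4%:R / 3%:R * (f (lam k) - f (lam k.+1)).
  have := bsum_descent H_sym aQ_gt0 aP_gt0 aR_gt0 (step k) (bsum_iter_feasible k).
  rewrite -/T; lra.
have A_ge0 : 0 <= spec_norm H * Rad ^+ 2 by rewrite mulr_ge0 ?spec_norm_ge0 ?sqr_ge0.
have := ler_wpM2r T_ge0 S_le; have := ler_wpM2l A_ge0 T_le.
have decr : 0 <= f (lam k) - f (lam k.+1) by rewrite subr_ge0 bsum_iter_decr.
have := mulr_ge0 A_ge0 decr.
lra.
Qed.

End Convergence.

Unset Implicit Arguments.

Theorem theorem3 (R : realType) (n m : nat) (H : 'M[R]_(dimN n m)) (eps : R)
  (lstar : 'cV[R]_(dimN n m)) (lam : nat -> 'cV[R]_(dimN n m)) (Rad : R) :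
  is_psd H ->
  0 < eps ->
  0 < lambda_max (HQQ H) -> 0 < lambda_max (HPP H) -> 0 < lambda_max (HRR H) ->
  is_minimizer H eps lstar ->
  (Jdual H eps (lam 0%N) < +oo)%E ->
  (forall k, bsum_step H eps (lam k) (lam k.+1)) ->
  (* Rad is the (finite) value of sup_{l in F, l' in Gamma_+^*} ||l - l'|| *)
  (forall l l', (Jdual H eps l <= Jdual H eps (lam 0%N))%E -> is_minimizer H eps l' ->
     enorm (l - l') <= Rad) ->
  (forall B, (forall l l', (Jdual H eps l <= Jdual H eps (lam 0%N))%E ->
     is_minimizer H eps l' -> enorm (l - l') <= B) -> Rad <= B) ->
  let sigma := (9%:R * spec_norm H * Rad ^+ 2)^-1 in
  let c := Order.max (Order.max (4%:R * sigma - 2%:R)%:E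
                       (Jdual H eps (lam 0%N) - Jdual H eps lstar)%E) 2%:E in
  forall k : nat, (1 <= k)%N ->
    (Jdual H eps (lam k) - Jdual H eps lstar <= c * (sigma^-1 / k%:R)%:E)%E.
Proof.
move=> [H_sym H_quad] _ aQ aP aR lstar_min lam0_fin step Rad_ub _ sigma c k k_ge1.
have H_psd u : 0 <= dot u (H *m u) by rewrite -quadE.
have feas := bsum_iter_feasible lam0_fin step.
have feas_star := minimizer_feasible lstar_min lam0_fin.
have s_ge0 : 0 <= 9%:R * spec_norm H * Rad ^+ 2.
  by rewrite mulr_ge0 ?sqr_ge0 // mulr_ge0 ?spec_norm_ge0.
have gap_ge0 j : 0 <= fdual H (Wvec n m eps) (lam j) - fdual H (Wvec n m eps) lstar.
  by rewrite subr_ge0 (minimizer_le lstar_min lam0_fin step).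
have := sublinear_rate s_ge0 gap_ge0
  (bsum_gap_recurrence H_sym H_psd aQ aP aR lstar_min lam0_fin step Rad_ub) k_ge1.
rewrite /c /sigma invrK (Jdual_feasible _ _ (feas k)) (Jdual_feasible _ _ (feas 0%N)).
by rewrite (Jdual_feasible _ _ feas_star) -EFinB -!EFin_max -EFinM lee_fin.
Qed.
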